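(* If $\mathcal{D}$ is a fibrant double category, then the functor $\mathbf{Mnd}(\mathcal{D})\to\mathcal{D}_0$ is a fibration and the functor $\mathbf{Cmd}(\mathcal{D})\to\mathcal{D}_0$ is an opfibration, where both functors send a (co)monad $M\colon A\nrightarrow A$ to $A$ and a (co)monad morphism to its vertical source (equal to its target).
   Context: A (pseudo) double category $\mathcal{D}$ has a category $\mathcal{D}_0$ of objects and vertical 1-cells, a category $\mathcal{D}_1$ of horizontal 1-cells $M\colon A\nrightarrow B$ and 2-morphisms (squares with vertical source and target), units $1_A$, and horizontal composition $\odot$ associative and unital up to coherent globular isomorphisms (globular: identity vertical source and target). A monad in $\mathcal{D}$ is a horizontal endo-1-cell $M\colon A\nrightarrow A$ with globular 2-morphisms $m\colon M\odot M\Rightarrow M$ and $\eta\colon1_A\Rightarrow M$ satisfying associativity and unit laws; a monad morphism $M\to N$ ($N\colon B\nrightarrow B$) is a 2-morphism $M\Rightarrow N$ whose vertical source and target are the same $f\colon A\to B$, compatible with multiplications and units. This gives the category $\mathbf{Mnd}(\mathcal{D})$. Dually, comonads $C\colon A\nrightarrow A$ with globular $\Delta\colon C\Rightarrow C\odot C$, $\epsilon\colon C\Rightarrow1_A$ (coassociative, counital) and comonad morphisms (2-morphisms with equal vertical source and target compatible with $\Delta,\epsilon$) form $\mathbf{Cmd}(\mathcal{D})$. $\mathcal{D}$ is fibrant if every vertical $f\colon A\to B$ has a companion $\hat f\colon A\nrightarrow B$ (with $p_1\colon\hat f\Rightarrow1_B$ of vertical source $f$, target $\mathrm{id}_B$,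 and $p_2\colon1_A\Rightarrow\hat f$ of source $\mathrm{id}_A$, target $f$, $p_1p_2=1_f$, $p_1\odot p_2\cong1_{\hat f}$) and a conjoint $\check f\colon B\nrightarrow A$ (with $q_1\colon\check f\Rightarrow1_B$ of source $\mathrm{id}_B$, target $f$, $q_2\colon1_A\Rightarrow\check f$ of source $f$, target $\mathrm{id}_A$, $q_1q_2=1_f$, $q_2\odot q_1\cong1_{\check f}$). *)

(* Conventions:
   - vertical composition [vcomp f g] is diagrammatic: first f, then g;
   - vertical composition of squares [sqcomp a b]: first a, then b;
   - horizontal composition [hcomp M N] of M : A -|-> B and N : B -|-> C
     is diagrammatic; the paper's  N (.) M  is our  hcomp M N.  *)

Set Implicit Arguments.
Unset Strict Implicit.

Record DoubleCat : Type := {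
  ob : Type;
  vhom : ob -> ob -> Type;
  vid : forall A, vhom A A;
  vcomp : forall A B C, vhom A B -> vhom B C -> vhom A C;
  vcomp_id_l : forall A B (f : vhom A B), vcomp (vid A) f = f;
  vcomp_id_r : forall A B (f : vhom A B), vcomp f (vid B) = f;
  vcomp_assoc : forall A B C D (f : vhom A B) (g : vhom B C) (h : vhom C D),
      vcomp (vcomp f g) h = vcomp f (vcomp g h);
  hor : ob -> ob -> Type;
  sq : forall A B C D, hor A B -> hor C D -> Type;
  sqL : forall A B C D (M : hor A B) (N : hor C D), sq M N -> vhom A C;
  sqR : forall A B C D (M : hor A B) (N : hor C D), sq M N -> vhom B D;
  sqid : forall A B (M : hor A B), sq M M;
  sqid_L : forall A B (M : hor A B), sqL (sqid M) = vid A;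
  sqid_R : forall A B (M : hor A B), sqR (sqid M) = vid B;
  sqcomp : forall A B C D E F (M : hor A B) (N : hor C D) (P : hor E F),
      sq M N -> sq N P -> sq M P;
  sqcomp_L : forall A B C D E F (M : hor A B) (N : hor C D) (P : hor E F)
      (a : sq M N) (b : sq N P), sqL (sqcomp a b) = vcomp (sqL a) (sqL b);
  sqcomp_R : forall A B C D E F (M : hor A B) (N : hor C D) (P : hor E F)
      (a : sq M N) (b : sq N P), sqR (sqcomp a b) = vcomp (sqR a) (sqR b);
  sqcomp_id_l : forall A B C D (M : hor A B) (N : hor C D) (a : sq M N),
      sqcomp (sqid M) a = a;
  sqcomp_id_r : forall A B C D (M : hor A B) (N : hor C D) (a : sq M N),
      sqcomp a (sqid N) = a;
  sqcomp_assoc : forall A B C D E F G H (M : hor A B) (N : hor C D)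
      (P : hor E F) (Q : hor G H) (a : sq M N) (b : sq N P) (c : sq P Q),
      sqcomp (sqcomp a b) c = sqcomp a (sqcomp b c);
  hunit : forall A, hor A A;
  hunitSq : forall A B (f : vhom A B), sq (hunit A) (hunit B);
  hunitSq_L : forall A B (f : vhom A B), sqL (hunitSq f) = f;
  hunitSq_R : forall A B (f : vhom A B), sqR (hunitSq f) = f;
  hunitSq_id : forall A, hunitSq (vid A) = sqid (hunit A);
  hunitSq_comp : forall A B C (f : vhom A B) (g : vhom B C),
      hunitSq (vcomp f g) = sqcomp (hunitSq f) (hunitSq g);
  hcomp : forall A B C, hor A B -> hor B C -> hor A C;
  sqh : forall A B C A' B' C' (M : hor A B) (N : hor B C)
      (M' : hor A' B') (N' : hor B' C') (a : sq M M') (b : sq N N'),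
      sqR a = sqL b -> sq (hcomp M N) (hcomp M' N');
  sqh_L : forall A B C A' B' C' (M : hor A B) (N : hor B C)
      (M' : hor A' B') (N' : hor B' C') (a : sq M M') (b : sq N N')
      (e : sqR a = sqL b), sqL (sqh e) = sqL a;
  sqh_R : forall A B C A' B' C' (M : hor A B) (N : hor B C)
      (M' : hor A' B') (N' : hor B' C') (a : sq M M') (b : sq N N')
      (e : sqR a = sqL b), sqR (sqh e) = sqR b;
  sqh_id : forall A B C (M : hor A B) (N : hor B C)
      (e : sqR (sqid M) = sqL (sqid N)), sqh e = sqid (hcomp M N);
  sqh_comp : forall A B C A' B' C' A'' B'' C''
      (M : hor A B) (N : hor B C) (M' : hor A' B') (N' : hor B' C')
      (M'' : hor A'' B'') (N'' : hor B'' C'')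
      (a : sq M M') (b : sq N N') (a' : sq M' M'') (b' : sq N' N'')
      (e : sqR a = sqL b) (e' : sqR a' = sqL b')
      (e'' : sqR (sqcomp a a') = sqL (sqcomp b b')),
      sqh e'' = sqcomp (sqh e) (sqh e');
  assoc : forall A B C D (M : hor A B) (N : hor B C) (P : hor C D),
      sq (hcomp (hcomp M N) P) (hcomp M (hcomp N P));
  associnv : forall A B C D (M : hor A B) (N : hor B C) (P : hor C D),
      sq (hcomp M (hcomp N P)) (hcomp (hcomp M N) P);
  assoc_L : forall A B C D (M : hor A B) (N : hor B C) (P : hor C D),
      sqL (assoc M N P) = vid A;
  assoc_R : forall A B C D (M : hor A B) (N : hor B C) (P : hor C D),
      sqR (assoc M N P) = vid D;
  associnv_L : forall A B C D (M : hor A B) (N : hor B C) (P : hor C D),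
      sqL (associnv M N P) = vid A;
  associnv_R : forall A B C D (M : hor A B) (N : hor B C) (P : hor C D),
      sqR (associnv M N P) = vid D;
  assoc_inv1 : forall A B C D (M : hor A B) (N : hor B C) (P : hor C D),
      sqcomp (assoc M N P) (associnv M N P) = sqid (hcomp (hcomp M N) P);
  assoc_inv2 : forall A B C D (M : hor A B) (N : hor B C) (P : hor C D),
      sqcomp (associnv M N P) (assoc M N P) = sqid (hcomp M (hcomp N P));
  assoc_nat : forall A B C D A' B' C' D'
      (M : hor A B) (N : hor B C) (P : hor C D)
      (M' : hor A' B') (N' : hor B' C') (P' : hor C' D')
      (a : sq M M') (b : sq N N') (c : sq P P')
      (e1 : sqR a = sqL b) (e2 : sqR (sqh e1) = sqL c)
      (e3 : sqR b = sqL c) (e4 : sqR a = sqL (sqh e3)),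
      sqcomp (sqh e2) (assoc M' N' P') = sqcomp (assoc M N P) (sqh e4);
  lunit : forall A B (M : hor A B), sq (hcomp (hunit A) M) M;
  lunitinv : forall A B (M : hor A B), sq M (hcomp (hunit A) M);
  lunit_L : forall A B (M : hor A B), sqL (lunit M) = vid A;
  lunit_R : forall A B (M : hor A B), sqR (lunit M) = vid B;
  lunitinv_L : forall A B (M : hor A B), sqL (lunitinv M) = vid A;
  lunitinv_R : forall A B (M : hor A B), sqR (lunitinv M) = vid B;
  lunit_inv1 : forall A B (M : hor A B),
      sqcomp (lunit M) (lunitinv M) = sqid (hcomp (hunit A) M);
  lunit_inv2 : forall A B (M : hor A B), sqcomp (lunitinv M) (lunit M) = sqid M;
  lunit_nat : forall A B A' B' (M : hor A B) (M' : hor A' B') (a : sq M M')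
      (e : sqR (hunitSq (sqL a)) = sqL a),
      sqcomp (sqh e) (lunit M') = sqcomp (lunit M) a;
  runit : forall A B (M : hor A B), sq (hcomp M (hunit B)) M;
  runitinv : forall A B (M : hor A B), sq M (hcomp M (hunit B));
  runit_L : forall A B (M : hor A B), sqL (runit M) = vid A;
  runit_R : forall A B (M : hor A B), sqR (runit M) = vid B;
  runitinv_L : forall A B (M : hor A B), sqL (runitinv M) = vid A;
  runitinv_R : forall A B (M : hor A B), sqR (runitinv M) = vid B;
  runit_inv1 : forall A B (M : hor A B),
      sqcomp (runit M) (runitinv M) = sqid (hcomp M (hunit B));
  runit_inv2 : forall A B (M : hor A B), sqcomp (runitinv M) (runit M) = sqid M;
  runit_nat : forall A B A' B' (M : hor A B) (M' : hor A' B') (a : sq M M')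
      (e : sqR a = sqL (hunitSq (sqR a))),
      sqcomp (sqh e) (runit M') = sqcomp (runit M) a;
  pentagon : forall A B C D E (M : hor A B) (N : hor B C) (P : hor C D)
      (Q : hor D E)
      (e1 : sqR (assoc M N P) = sqL (sqid Q))
      (e2 : sqR (sqid M) = sqL (assoc N P Q)),
      sqcomp (assoc (hcomp M N) P Q) (assoc M N (hcomp P Q))
      = sqcomp (sqcomp (sqh e1) (assoc M (hcomp N P) Q)) (sqh e2);
  triangle : forall A B C (M : hor A B) (N : hor B C)
      (e1 : sqR (sqid M) = sqL (lunit N))
      (e2 : sqR (runit M) = sqL (sqid N)),
      sqcomp (assoc M (hunit B) N) (sqh e1) = sqh e2
}.

Arguments vid {d} A.
Arguments vcomp {d A B C} f g.
Arguments sq {d A B C D} M N.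
Arguments sqL {d A B C D M N} a.
Arguments sqR {d A B C D M N} a.
Arguments sqid {d A B} M.
Arguments sqcomp {d A B C D E F M N P} a b.
Arguments hunit {d} A.
Arguments hunitSq {d A B} f.
Arguments hcomp {d A B C} M N.
Arguments sqh {d A B C A' B' C' M N M' N' a b} e.
Arguments assoc {d A B C D} M N P.
Arguments associnv {d A B C D} M N P.
Arguments lunit {d A B} M.
Arguments lunitinv {d A B} M.
Arguments runit {d A B} M.
Arguments runitinv {d A B} M.

Section DC.
Variable D : DoubleCat.

Definition is_companion (A B : ob D) (f : vhom A B) (fh : hor A B) : Prop :=
  exists (p1 : sq fh (hunit B)) (p2 : sq (hunit A) fh),
    sqL p1 = f /\ sqR p1 = vid B /\ sqL p2 = vid A /\ sqR p2 = f /\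
    sqcomp p2 p1 = hunitSq f /\
    (* p1 (.) p2 ~= 1_fh, i.e. our sqh p2 p1, conjugated by unitors *)
    forall e : sqR p2 = sqL p1,
      sqcomp (sqcomp (lunitinv fh) (sqh e)) (runit fh) = sqid fh.

Definition is_conjoint (A B : ob D) (f : vhom A B) (fc : hor B A) : Prop :=
  exists (q1 : sq fc (hunit B)) (q2 : sq (hunit A) fc),
    sqL q1 = vid B /\ sqR q1 = f /\ sqL q2 = f /\ sqR q2 = vid A /\
    sqcomp q2 q1 = hunitSq f /\
    (* q2 (.) q1 ~= 1_fc, i.e. our sqh q1 q2, conjugated by unitors *)
    forall e : sqR q1 = sqL q2,
      sqcomp (sqcomp (runitinv fc) (sqh e)) (lunit fc) = sqid fc.

Definition fibrant : Prop :=
  forall (A B : ob D) (f : vhom A B),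
    (exists fh : hor A B, is_companion f fh) /\
    (exists fc : hor B A, is_conjoint f fc).

Record monad : Type := {
  mA : ob D;
  mM : hor mA mA;
  mmul : sq (hcomp mM mM) mM;
  munit : sq (hunit mA) mM;
  mmul_L : sqL mmul = vid mA;
  mmul_R : sqR mmul = vid mA;
  munit_L : sqL munit = vid mA;
  munit_R : sqR munit = vid mA;
  mmul_assoc : forall (e1 : sqR mmul = sqL (sqid mM))
      (e2 : sqR (sqid mM) = sqL mmul),
      sqcomp (sqh e1) mmul = sqcomp (assoc mM mM mM) (sqcomp (sqh e2) mmul);
  munit_left : forall e : sqR munit = sqL (sqid mM),
      sqcomp (sqh e) mmul = lunit mM;
  munit_right : forall e : sqR (sqid mM) = sqL munit,
      sqcomp (sqh e) mmul = runit mM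
}.

Record mnd_hom (X Y : monad) : Type := {
  mh : sq (mM X) (mM Y);
  mh_sides : sqL mh = sqR mh;
  mh_mul : forall e : sqR mh = sqL mh,
      sqcomp (mmul X) mh = sqcomp (sqh e) (mmul Y);
  mh_unit : sqcomp (munit X) mh = sqcomp (hunitSq (sqL mh)) (munit Y)
}.

(* the functor Mnd(D) -> D_0 on morphisms: the vertical source *)
Definition mnd_proj (X Y : monad) (a : mnd_hom X Y) : vhom (mA X) (mA Y) :=
  sqL (mh a).

Record comonad : Type := {
  cA : ob D;
  cC : hor cA cA;
  cdelta : sq cC (hcomp cC cC);
  ceps : sq cC (hunit cA);
  cdelta_L : sqL cdelta = vid cA;
  cdelta_R : sqR cdelta = vid cA;
  ceps_L : sqL ceps = vid cA;
  ceps_R : sqR ceps = vid cA;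
  cdelta_coassoc : forall (e1 : sqR cdelta = sqL (sqid cC))
      (e2 : sqR (sqid cC) = sqL cdelta),
      sqcomp (sqcomp cdelta (sqh e1)) (assoc cC cC cC)
      = sqcomp cdelta (sqh e2);
  ceps_left : forall e : sqR ceps = sqL (sqid cC),
      sqcomp (sqcomp cdelta (sqh e)) (lunit cC) = sqid cC;
  ceps_right : forall e : sqR (sqid cC) = sqL ceps,
      sqcomp (sqcomp cdelta (sqh e)) (runit cC) = sqid cC
}.

Record cmd_hom (X Y : comonad) : Type := {
  ch : sq (cC X) (cC Y);
  ch_sides : sqL ch = sqR ch;
  ch_delta : forall e : sqR ch = sqL ch,
      sqcomp (cdelta X) (sqh e) = sqcomp ch (cdelta Y);
  ch_eps : sqcomp (ceps X) (hunitSq (sqL ch)) = sqcomp ch (ceps Y)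
}.

Definition cmd_proj (X Y : comonad) (a : cmd_hom X Y) : vhom (cA X) (cA Y) :=
  sqL (ch a).

End DC.

Arguments mA {D} m.
Arguments cA {D} c.
Arguments mh {D X Y} m.
Arguments ch {D X Y} c.
Arguments mnd_proj {D X Y} a.
Arguments cmd_proj {D X Y} a.

Section Comp.
Variable D : DoubleCat.

Program Definition mnd_comp (X Y Z : monad D) (a : mnd_hom X Y) (b : mnd_hom Y Z)
  : mnd_hom X Z :=
  {| mh := sqcomp (mh a) (mh b) |}.
Next Obligation.
  intros. rewrite sqcomp_L, sqcomp_R, (mh_sides a), (mh_sides b). reflexivity.
Qed.
Next Obligation.
  intros X Y Z a b e.
  pose proof (eq_sym (mh_sides a)) as ea. pose proof (eq_sym (mh_sides b)) as eb.
  rewrite <- sqcomp_assoc, (@mh_mul _ _ _ a ea), sqcomp_assoc, (@mh_mul _ _ _ b eb).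
  rewrite <- sqcomp_assoc, <- (sqh_comp ea eb e). reflexivity.
Qed.
Next Obligation.
  intros X Y Z a b.
  rewrite <- sqcomp_assoc, (mh_unit a), sqcomp_assoc, (mh_unit b).
  rewrite <- sqcomp_assoc, <- hunitSq_comp, sqcomp_L. reflexivity.
Qed.

Program Definition cmd_comp (X Y Z : comonad D) (a : cmd_hom X Y) (b : cmd_hom Y Z)
  : cmd_hom X Z :=
  {| ch := sqcomp (ch a) (ch b) |}.
Next Obligation.
  intros. rewrite sqcomp_L, sqcomp_R, (ch_sides a), (ch_sides b). reflexivity.
Qed.
Next Obligation.
  intros X Y Z a b e.
  pose proof (eq_sym (ch_sides a)) as ea. pose proof (eq_sym (ch_sides b)) as eb.
  rewrite (sqh_comp ea eb e), <- sqcomp_assoc, (@ch_delta _ _ _ a ea).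
  rewrite sqcomp_assoc, (@ch_delta _ _ _ b eb), <- sqcomp_assoc. reflexivity.
Qed.
Next Obligation.
  intros X Y Z a b.
  rewrite sqcomp_L, hunitSq_comp, <- sqcomp_assoc, (ch_eps a).
  rewrite sqcomp_assoc, (ch_eps b), <- sqcomp_assoc. reflexivity.
Qed.
End Comp.

Arguments mnd_comp {D X Y Z} a b.
Arguments cmd_comp {D X Y Z} a b.

(* ---------- Grothendieck (op)fibrations ----------
   A functor p : E -> B is given by its object part [p] and morphism part
   [pm]; composition in both categories is diagrammatic. *)
Section Fib.
Variables (B : Type) (BH : B -> B -> Type)
          (Bcomp : forall x y z, BH x y -> BH y z -> BH x z)
          (E : Type) (EH : E -> E -> Type)
          (Ecomp : forall x y z, EH x y -> EH y z -> EH x z)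
          (p : E -> B) (pm : forall x y, EH x y -> BH (p x) (p y)).

Definition cartesian (Y X : E) (phi : EH Y X) : Prop :=
  forall (Z : E) (g : EH Z X) (h : BH (p Z) (p Y)),
    pm g = Bcomp h (pm phi) ->
    exists k : EH Z Y, (pm k = h /\ Ecomp k phi = g) /\
      forall k' : EH Z Y, pm k' = h /\ Ecomp k' phi = g -> k' = k.

Definition cocartesian (X Y : E) (phi : EH X Y) : Prop :=
  forall (Z : E) (g : EH X Z) (h : BH (p Y) (p Z)),
    pm g = Bcomp (pm phi) h ->
    exists k : EH Y Z, (pm k = h /\ Ecomp phi k = g) /\
      forall k' : EH Y Z, pm k' = h /\ Ecomp phi k' = g -> k' = k.

(* every f : A -> p X has a cartesian lift phi : Y -> X, with p phi = f
   (equality of arrows, i.e. also p Y = A) *)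
Definition is_fibration : Prop :=
  forall (X : E) (A : B) (f : BH A (p X)),
    exists (Y : E) (phi : EH Y X),
      existT (fun A' => BH A' (p X)) (p Y) (pm phi)
      = existT (fun A' => BH A' (p X)) A f
      /\ cartesian phi.

Definition is_opfibration : Prop :=
  forall (X : E) (A : B) (f : BH (p X) A),
    exists (Y : E) (phi : EH X Y),
      existT (fun A' => BH (p X) A') (p Y) (pm phi)
      = existT (fun A' => BH (p X) A') A f
      /\ cocartesian phi.
End Fib.

(* Fix f : A -> B.  For a horizontal endocell M on B, the restriction
   M(f,f) = f̌ ⊙ M ⊙ f̂ (composed in the paper's order) comes with a square
   onto M whose vertical sides are both f: the composite
   f̌ ⊙ M ⊙ f̂ => M ⊙ f̂ => M of the squares built from q1 : f̌ => 1_B and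
   p1 : f̂ => 1_B.  Both are cartesian: the factorisation through them is
   written down using q2 and p2, and it is unique because the equations
   q2 ⊙ q1 ≅ 1 and p1 ⊙ p2 ≅ 1, together with the unitors and Kelly's
   coherence identities, recover any square from its composite.  A cartesian
   square r with equal sides transports a monad structure on M to M(f,f): the
   multiplication and unit are the factorisations of (r ⊙ r);μ and 1_f;η
   through r, each monad law holds because both of its sides agree after
   composing with r, and r becomes a cartesian monad morphism.  Dually, the
   extension f̂ ⊙ C ⊙ f̌ of a comonad C, built from q2 and p2, is opcartesian
   and yields opcartesian comonad morphisms. *)

From Stdlib Require Import ProofIrrelevance.
Set Implicit Arguments.
Unset Strict Implicit.

Create HintDb sides.
#[export] Hint Rewrite sqcomp_L sqcomp_R sqh_L sqh_R sqid_L sqid_R hunitSq_L hunitSq_R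
  assoc_L assoc_R associnv_L associnv_R lunit_L lunit_R lunitinv_L lunitinv_R
  runit_L runit_R runitinv_L runitinv_R vcomp_id_l vcomp_id_r vcomp_assoc
  mmul_L mmul_R munit_L munit_R cdelta_L cdelta_R ceps_L ceps_R : sides.

(* Closes equations between vertical boundaries, also rewriting with context
   hypotheses [sqL x = _] and [sqR x = _]; the guards skip those such as
   [sqL x = sqR x], which would loop. *)
Ltac sides := repeat progress (autorewrite with sides;
   try (match goal with H : sqL ?x = ?y |- context[sqL ?x] =>
          lazymatch y with context[sqR x] => fail | _ => rewrite H end end);
   try (match goal with H : sqR ?x = ?y |- context[sqR ?x] =>
          lazymatch y with context[sqL x] => fail | _ => rewrite H end end));
   reflexivity.

(* Horizontal composite of squares, in diagrammatic order (the paper's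
   [b (.) a]); its boundary condition [sqR a = sqL b] is discharged by [sides],
   and by [sqh_irrelevant] the proof chosen never matters. *)
#[warnings="-non-reversible-notation"]
Notation "a ⊙ b" := (@sqh _ _ _ _ _ _ _ _ _ _ _ a b ltac:(sides))
  (at level 40, left associativity).
Notation "a ;; b" := (sqcomp a b) (at level 45, left associativity).

Ltac simpl_isos := rewrite ?sqcomp_id_l, ?sqcomp_id_r, ?lunit_inv1, ?lunit_inv2,
  ?runit_inv1, ?runit_inv2, ?assoc_inv1, ?assoc_inv2.

Section HorizontalCalculus.
Variable D : DoubleCat.

Lemma sqh_irrelevant (A B C A' B' C' : ob D) (M : hor A B) (N : hor B C)
  (M' : hor A' B') (N' : hor B' C') (a : sq M M') (b : sq N N')
  (e e' : sqR a = sqL b) : sqh e = sqh e'.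
Proof. f_equal; apply proof_irrelevance. Qed.

Lemma sqh_congr (A B C A' B' C' : ob D) (M : hor A B) (N : hor B C)
  (M' : hor A' B') (N' : hor B' C') (a a' : sq M M') (b b' : sq N N')
  (e : sqR a = sqL b) (e' : sqR a' = sqL b') : a = a' -> b = b' -> sqh e = sqh e'.
Proof. intros -> ->; apply sqh_irrelevant. Qed.

Lemma sqh_sqid (A B C : ob D) (M : hor A B) (N : hor B C) (a : sq M M) (b : sq N N)
  (e : sqR a = sqL b) : a = sqid M -> b = sqid N -> sqh e = sqid (hcomp M N).
Proof. intros -> ->; apply sqh_id. Qed.

Section Interchange.
Variables (A B C A' B' C' A'' B'' C'' : ob D)
  (M : hor A B) (N : hor B C) (M' : hor A' B') (N' : hor B' C')
  (M'' : hor A'' B'') (N'' : hor B'' C'')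
  (a : sq M M') (b : sq N N') (a' : sq M' M'') (b' : sq N' N'').

Lemma interchange_side (e : sqR a = sqL b) (e' : sqR a' = sqL b') :
  sqR (a ;; a') = sqL (b ;; b').
Proof. rewrite sqcomp_R, sqcomp_L, e, e'; reflexivity. Qed.

Lemma sqcomp_sqh (e : sqR a = sqL b) (e' : sqR a' = sqL b') :
  sqh e ;; sqh e' = sqh (interchange_side e e').
Proof. symmetry; apply sqh_comp. Qed.
End Interchange.

Lemma sqcomp_congl (A B C E F G : ob D) (P : hor A B) (Q : hor C E) (R : hor F G)
  (x y : sq P Q) (z : sq Q R) : x = y -> x ;; z = y ;; z.
Proof. intros ->; reflexivity. Qed.

Lemma sqcomp_congr (A B C E F G : ob D) (P : hor A B) (Q : hor C E) (R : hor F G)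
  (x y : sq Q R) (z : sq P Q) : x = y -> z ;; x = z ;; y.
Proof. intros ->; reflexivity. Qed.

Lemma split_epi_cancel (A B C E : ob D) (P : hor A B) (Q : hor C E) (x : sq P Q)
  (y : sq Q P) (F G : ob D) (R : hor F G) (u v : sq Q R) :
  y ;; x = sqid Q -> x ;; u = x ;; v -> u = v.
Proof.
  intros yx xuv.
  rewrite <- (sqcomp_id_l u), <- (sqcomp_id_l v), <- yx, !sqcomp_assoc, xuv.
  reflexivity.
Qed.

Lemma split_mono_cancel (A B C E : ob D) (P : hor A B) (Q : hor C E) (x : sq P Q)
  (y : sq Q P) (F G : ob D) (R : hor F G) (u v : sq R P) :
  x ;; y = sqid P -> u ;; x = v ;; x -> u = v.
Proof.
  intros xy uxv.
  rewrite <- (sqcomp_id_r u), <- (sqcomp_id_r v), <- xy, <- !sqcomp_assoc, uxv.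
  reflexivity.
Qed.

Lemma lunit_natural (A B A' B' : ob D) (M : hor A B) (M' : hor A' B') (a : sq M M')
  (g : vhom A A') (e : sqR (hunitSq g) = sqL a) : sqh e ;; lunit M' = lunit M ;; a.
Proof.
  assert (ga : sqL a = g) by (rewrite <- e; apply hunitSq_R).
  subst g; apply lunit_nat.
Qed.

Lemma runit_natural (A B A' B' : ob D) (M : hor A B) (M' : hor A' B') (a : sq M M')
  (g : vhom B B') (e : sqR a = sqL (hunitSq g)) : sqh e ;; runit M' = runit M ;; a.
Proof.
  assert (ga : sqR a = g) by (rewrite e; apply hunitSq_L).
  subst g; apply runit_nat.
Qed.

Lemma lunitinv_natural (A B A' B' : ob D) (M : hor A B) (M' : hor A' B') (a : sq M M')
  (g : vhom A A') (e : sqR (hunitSq g) = sqL a) : lunitinv M ;; sqh e = a ;; lunitinv M'.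
Proof.
  apply (split_mono_cancel (x := lunit M') (y := lunitinv M')); [apply lunit_inv1|].
  rewrite !sqcomp_assoc, lunit_inv2, sqcomp_id_r, lunit_natural, <- sqcomp_assoc,
    lunit_inv2, sqcomp_id_l.
  reflexivity.
Qed.

Lemma runitinv_natural (A B A' B' : ob D) (M : hor A B) (M' : hor A' B') (a : sq M M')
  (g : vhom B B') (e : sqR a = sqL (hunitSq g)) : runitinv M ;; sqh e = a ;; runitinv M'.
Proof.
  apply (split_mono_cancel (x := runit M') (y := runitinv M')); [apply runit_inv1|].
  rewrite !sqcomp_assoc, runit_inv2, sqcomp_id_r, runit_natural, <- sqcomp_assoc,
    runit_inv2, sqcomp_id_l.
  reflexivity.
Qed.

Lemma lunit_natural_sqid (A B B' : ob D) (M : hor A B) (M' : hor A B') (a : sq M M')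
  (e : sqR (sqid (hunit A)) = sqL a) : sqh e ;; lunit M' = lunit M ;; a.
Proof.
  assert (e' : sqR (hunitSq (vid A)) = sqL a) by (rewrite hunitSq_R, <- e; sides).
  rewrite <- (lunit_natural e'); apply sqcomp_congl, sqh_congr; [|reflexivity].
  symmetry; apply hunitSq_id.
Qed.

Lemma runit_natural_sqid (A B A' : ob D) (M : hor A B) (M' : hor A' B) (a : sq M M')
  (e : sqR a = sqL (sqid (hunit B))) : sqh e ;; runit M' = runit M ;; a.
Proof.
  assert (e' : sqR a = sqL (hunitSq (vid B))) by (rewrite hunitSq_L, e; sides).
  rewrite <- (runit_natural e'); apply sqcomp_congl, sqh_congr; [reflexivity|].
  symmetry; apply hunitSq_id.
Qed.

Lemma sqid_hunit_sqh_inj (A B E : ob D) (X : hor A B) (Y : hor A E) (x y : sq X Y)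
  (ex : sqR (sqid (hunit A)) = sqL x) (ey : sqR (sqid (hunit A)) = sqL y) :
  sqh ex = sqh ey -> x = y.
Proof.
  intro exy.
  apply (split_epi_cancel (x := lunit X) (y := lunitinv X)); [apply lunit_inv2|].
  rewrite <- (lunit_natural_sqid ex), <- (lunit_natural_sqid ey), exy; reflexivity.
Qed.

Lemma sqh_sqid_hunit_inj (A B C : ob D) (X : hor A B) (Y : hor C B) (x y : sq X Y)
  (ex : sqR x = sqL (sqid (hunit B))) (ey : sqR y = sqL (sqid (hunit B))) :
  sqh ex = sqh ey -> x = y.
Proof.
  intro exy.
  apply (split_epi_cancel (x := runit X) (y := runitinv X)); [apply runit_inv2|].
  rewrite <- (runit_natural_sqid ex), <- (runit_natural_sqid ey), exy; reflexivity.
Qed.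

Section AssocNatural.
Variables (A B C E A' B' C' E' : ob D) (M : hor A B) (N : hor B C) (P : hor C E)
  (M' : hor A' B') (N' : hor B' C') (P' : hor C' E')
  (a : sq M M') (b : sq N N') (c : sq P P').

Definition right_nested_inner (e1 : sqR a = sqL b) (e2 : sqR (sqh e1) = sqL c) :
  sqR b = sqL c := eq_trans (eq_sym (sqh_R e1)) e2.
Definition right_nested_outer (e3 : sqR b = sqL c) (e1 : sqR a = sqL b) :
  sqR a = sqL (sqh e3) := eq_trans e1 (eq_sym (sqh_L e3)).
Definition left_nested_inner (e3 : sqR b = sqL c) (e4 : sqR a = sqL (sqh e3)) :
  sqR a = sqL b := eq_trans e4 (sqh_L e3).
Definition left_nested_outer (e1 : sqR a = sqL b) (e3 : sqR b = sqL c) :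
  sqR (sqh e1) = sqL c := eq_trans (sqh_R e1) e3.

Lemma assoc_natural_l (e1 : sqR a = sqL b) (e2 : sqR (sqh e1) = sqL c) :
  sqh e2 ;; assoc M' N' P'
  = assoc M N P ;; sqh (right_nested_outer (right_nested_inner e2) e1).
Proof. apply assoc_nat. Qed.

Lemma assoc_natural_r (e3 : sqR b = sqL c) (e4 : sqR a = sqL (sqh e3)) :
  assoc M N P ;; sqh e4
  = sqh (left_nested_outer (left_nested_inner e4) e3) ;; assoc M' N' P'.
Proof. symmetry; apply assoc_nat. Qed.

Lemma associnv_natural (e1 : sqR a = sqL b) (e2 : sqR (sqh e1) = sqL c)
  (e3 : sqR b = sqL c) (e4 : sqR a = sqL (sqh e3)) :
  associnv M N P ;; sqh e2 = sqh e4 ;; associnv M' N' P'.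
Proof.
  apply (split_mono_cancel (x := assoc M' N' P') (y := associnv M' N' P'));
    [apply assoc_inv1|].
  rewrite !sqcomp_assoc, assoc_inv2, sqcomp_id_r, (assoc_nat e2 e4), <- sqcomp_assoc,
    assoc_inv2, sqcomp_id_l.
  reflexivity.
Qed.

Lemma associnv_natural_l (e3 : sqR b = sqL c) (e4 : sqR a = sqL (sqh e3)) :
  sqh e4 ;; associnv M' N' P'
  = associnv M N P ;; sqh (left_nested_outer (left_nested_inner e4) e3).
Proof. symmetry; apply associnv_natural. Qed.

Lemma associnv_natural_r (e1 : sqR a = sqL b) (e2 : sqR (sqh e1) = sqL c) :
  associnv M N P ;; sqh e2
  = sqh (right_nested_outer (right_nested_inner e2) e1) ;; associnv M' N' P'.
Proof. apply associnv_natural. Qed.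
End AssocNatural.

Lemma triangle_sq (A B C : ob D) (M : hor A B) (N : hor B C)
  (e : sqR (sqid M) = sqL (lunit N)) :
  assoc M (hunit B) N ;; sqh e = runit M ⊙ sqid N.
Proof. apply triangle. Qed.

Lemma pentagon_sq (A B C E F : ob D) (M : hor A B) (N : hor B C) (P : hor C E)
  (Q : hor E F) :
  assoc (hcomp M N) P Q ;; assoc M N (hcomp P Q) =
  (assoc M N P ⊙ sqid Q) ;; assoc M (hcomp N P) Q ;; (sqid M ⊙ assoc N P Q).
Proof. apply pentagon. Qed.

Lemma sqid_lunit_triangle (A B C : ob D) (X : hor A B) (M : hor B C) :
  sqid X ⊙ lunit M = associnv X (hunit B) M ;; (runit X ⊙ sqid M).
Proof.
  apply (split_epi_cancel (x := assoc X (hunit B) M) (y := associnv X (hunit B) M));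
    [apply assoc_inv2|].
  rewrite triangle_sq, <- sqcomp_assoc, assoc_inv1, sqcomp_id_l.
  apply sqh_irrelevant.
Qed.

Lemma sqid_lunitinv_triangle (A B C : ob D) (X : hor A B) (M : hor B C) :
  sqid X ⊙ lunitinv M = (runitinv X ⊙ sqid M) ;; assoc X (hunit B) M.
Proof.
  apply (split_mono_cancel (x := sqid X ⊙ lunit M) (y := sqid X ⊙ lunitinv M)).
  { rewrite sqcomp_sqh; apply sqh_sqid; [apply sqcomp_id_l|apply lunit_inv1]. }
  rewrite sqcomp_sqh, sqcomp_assoc, triangle_sq, sqcomp_sqh.
  apply sqh_congr; simpl_isos; reflexivity.
Qed.

Lemma runitinv_sqid_triangle (A B C : ob D) (X : hor A B) (M : hor B C) :
  runitinv X ⊙ sqid M = (sqid X ⊙ lunitinv M) ;; associnv X (hunit B) M.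
Proof.
  rewrite sqid_lunitinv_triangle, sqcomp_assoc, assoc_inv1, sqcomp_id_r.
  apply sqh_irrelevant.
Qed.

(* Kelly's consequences of the pentagon and triangle axioms. *)
Lemma assoc_lunit (A B C : ob D) (X : hor A B) (Y : hor B C) :
  assoc (hunit A) X Y ;; lunit (hcomp X Y) = lunit X ⊙ sqid Y.
Proof.
  match goal with |- ?x = ?y =>
    apply (@sqid_hunit_sqh_inj _ _ _ _ _ x y ltac:(sides) ltac:(sides)) end.
  transitivity ((sqid (hunit A) ⊙ assoc (hunit A) X Y)
                ;; (sqid (hunit A) ⊙ lunit (hcomp X Y))).
  { rewrite sqcomp_sqh; apply sqh_congr; [rewrite sqcomp_id_l|]; reflexivity. }
  apply (split_epi_cancel (x := assoc (hunit A) (hcomp (hunit A) X) Y)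
                          (y := associnv (hunit A) (hcomp (hunit A) X) Y));
    [apply assoc_inv2|].
  apply (split_epi_cancel (x := assoc (hunit A) (hunit A) X ⊙ sqid Y)
                          (y := associnv (hunit A) (hunit A) X ⊙ sqid Y)).
  { rewrite sqcomp_sqh; apply sqh_sqid; [apply assoc_inv2|apply sqcomp_id_l]. }
  rewrite <- !sqcomp_assoc, <- pentagon.
  rewrite (sqcomp_assoc (assoc (hcomp (hunit A) (hunit A)) X Y)), triangle_sq.
  rewrite (sqcomp_assoc (sqh _) (assoc (hunit A) (hcomp (hunit A) X) Y)),
    assoc_natural_r.
  rewrite <- sqcomp_assoc, sqcomp_sqh.
  transitivity ((runit (hunit A) ⊙ sqid X) ⊙ sqid Y ;; assoc (hunit A) X Y).
  2:{ f_equal. apply sqh_congr; [|symmetry; apply sqcomp_id_l].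
      rewrite triangle_sq; reflexivity. }
  rewrite assoc_natural_l; f_equal.
  apply sqh_congr; [reflexivity|]; symmetry; apply sqh_id.
Qed.

Lemma assoc_runit (A B C : ob D) (X : hor A B) (Y : hor B C) :
  assoc X Y (hunit C) ;; (sqid X ⊙ runit Y) = runit (hcomp X Y).
Proof.
  match goal with |- ?x = ?y =>
    apply (@sqh_sqid_hunit_inj _ _ _ _ _ x y ltac:(sides) ltac:(sides)) end.
  transitivity ((assoc X Y (hunit C) ⊙ sqid (hunit C))
                ;; ((sqid X ⊙ runit Y) ⊙ sqid (hunit C))).
  { rewrite sqcomp_sqh; apply sqh_congr; [|rewrite sqcomp_id_l]; reflexivity. }
  apply (split_mono_cancel (x := assoc X Y (hunit C)) (y := associnv X Y (hunit C)));
    [apply assoc_inv1|].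
  transitivity (assoc (hcomp X Y) (hunit C) (hunit C)
                ;; assoc X Y (hcomp (hunit C) (hunit C))
                ;; (sqid X ⊙ (sqid Y ⊙ lunit (hunit C)))).
  { rewrite sqcomp_assoc, assoc_natural_l, pentagon_sq, !sqcomp_assoc.
    f_equal; f_equal; rewrite sqcomp_sqh; apply sqh_congr.
    - symmetry; apply sqcomp_id_l.
    - rewrite triangle_sq; apply sqh_irrelevant. }
  transitivity (assoc (hcomp X Y) (hunit C) (hunit C)
                ;; (sqid (hcomp X Y) ⊙ lunit (hunit C)) ;; assoc X Y (hunit C)).
  2:{ f_equal; rewrite triangle_sq; apply sqh_irrelevant. }
  rewrite !sqcomp_assoc; f_equal; symmetry.
  transitivity ((sqid X ⊙ sqid Y) ⊙ lunit (hunit C) ;; assoc X Y (hunit C)).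
  { f_equal; apply sqh_congr; [|reflexivity]; symmetry; apply sqh_id. }
  rewrite assoc_natural_l; apply f_equal, sqh_congr; [reflexivity|apply sqh_irrelevant].
Qed.

Lemma associnv_lunit (A B C : ob D) (X : hor A B) (Y : hor B C) :
  associnv (hunit A) X Y ;; (lunit X ⊙ sqid Y) = lunit (hcomp X Y).
Proof. rewrite <- assoc_lunit, <- sqcomp_assoc, assoc_inv2, sqcomp_id_l; reflexivity. Qed.

Lemma lunitinv_assoc (A B C : ob D) (X : hor A B) (Y : hor B C) :
  (lunitinv X ⊙ sqid Y) ;; assoc (hunit A) X Y = lunitinv (hcomp X Y).
Proof.
  apply (split_mono_cancel (x := lunit (hcomp X Y)) (y := lunitinv (hcomp X Y)));
    [apply lunit_inv1|].
  rewrite lunit_inv2, sqcomp_assoc, assoc_lunit, sqcomp_sqh.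
  apply sqh_sqid; [apply lunit_inv2|apply sqcomp_id_l].
Qed.

Lemma associnv_runit (A B C : ob D) (X : hor A B) (Y : hor B C) :
  associnv X Y (hunit C) ;; runit (hcomp X Y) = sqid X ⊙ runit Y.
Proof. rewrite <- assoc_runit, <- sqcomp_assoc, assoc_inv2, sqcomp_id_l; reflexivity. Qed.

End HorizontalCalculus.

(** * Cartesian and opcartesian squares *)

Section CartesianSquares.
Variable D : DoubleCat.

Record cartesian_sq (A' B' A B : ob D) (P : hor A' B') (M : hor A B) (r : sq P M)
  : Type := {
  cart_factor : forall X Y (N : hor X Y) (th : sq N M) (g : vhom X A') (h : vhom Y B'),
    sqL th = vcomp g (sqL r) -> sqR th = vcomp h (sqR r) ->
    {k : sq N P | sqL k = g /\ sqR k = h /\ k ;; r = th};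
  cart_unique : forall X Y (N : hor X Y) (k k' : sq N P),
    sqL k = sqL k' -> sqR k = sqR k' -> k ;; r = k' ;; r -> k = k'
}.

Record opcartesian_sq (A B A' B' : ob D) (M : hor A B) (P : hor A' B') (s : sq M P)
  : Type := {
  opcart_factor : forall X Y (N : hor X Y) (th : sq M N) (g : vhom A' X) (h : vhom B' Y),
    sqL th = vcomp (sqL s) g -> sqR th = vcomp (sqR s) h ->
    {k : sq P N | sqL k = g /\ sqR k = h /\ s ;; k = th};
  opcart_unique : forall X Y (N : hor X Y) (k k' : sq P N),
    sqL k = sqL k' -> sqR k = sqR k' -> s ;; k = s ;; k' -> k = k'
}.

Section Lifts.
Variables (A' B' A B : ob D) (P : hor A' B') (M : hor A B).

Definition cart_lift (r : sq P M) (r_cart : cartesian_sq r) (X Y : ob D) (N : hor X Y)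
  (th : sq N M) (g : vhom X A') (h : vhom Y B')
  (thL : sqL th = vcomp g (sqL r)) (thR : sqR th = vcomp h (sqR r)) : sq N P :=
  proj1_sig (cart_factor r_cart thL thR).

Lemma cart_lift_L r r_cart X Y N th g h thL thR :
  sqL (@cart_lift r r_cart X Y N th g h thL thR) = g.
Proof. exact (proj1 (proj2_sig (cart_factor r_cart thL thR))). Qed.

Lemma cart_lift_R r r_cart X Y N th g h thL thR :
  sqR (@cart_lift r r_cart X Y N th g h thL thR) = h.
Proof. exact (proj1 (proj2 (proj2_sig (cart_factor r_cart thL thR)))). Qed.

Lemma cart_liftK r r_cart X Y N th g h thL thR :
  @cart_lift r r_cart X Y N th g h thL thR ;; r = th.
Proof. exact (proj2 (proj2 (proj2_sig (cart_factor r_cart thL thR)))). Qed.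

Definition opcart_lift (s : sq M P) (s_opcart : opcartesian_sq s) (X Y : ob D)
  (N : hor X Y) (th : sq M N) (g : vhom A' X) (h : vhom B' Y)
  (thL : sqL th = vcomp (sqL s) g) (thR : sqR th = vcomp (sqR s) h) : sq P N :=
  proj1_sig (opcart_factor s_opcart thL thR).

Lemma opcart_lift_L s s_opcart X Y N th g h thL thR :
  sqL (@opcart_lift s s_opcart X Y N th g h thL thR) = g.
Proof. exact (proj1 (proj2_sig (opcart_factor s_opcart thL thR))). Qed.

Lemma opcart_lift_R s s_opcart X Y N th g h thL thR :
  sqR (@opcart_lift s s_opcart X Y N th g h thL thR) = h.
Proof. exact (proj1 (proj2 (proj2_sig (opcart_factor s_opcart thL thR)))). Qed.

Lemma opcart_liftK s s_opcart X Y N th g h thL thR :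
  s ;; @opcart_lift s s_opcart X Y N th g h thL thR = th.
Proof. exact (proj2 (proj2 (proj2_sig (opcart_factor s_opcart thL thR)))). Qed.
End Lifts.

Lemma cartesian_sqcomp (A2 B2 A1 B1 A B : ob D) (P2 : hor A2 B2) (P1 : hor A1 B1)
  (M : hor A B) (r2 : sq P2 P1) (r1 : sq P1 M) :
  cartesian_sq r2 -> cartesian_sq r1 -> cartesian_sq (r2 ;; r1).
Proof.
  intros [ex2 un2] [ex1 un1]; split.
  - intros X Y N th g h thL thR.
    destruct (ex1 X Y N th (vcomp g (sqL r2)) (vcomp h (sqR r2)))
      as [k1 (k1L & k1R & k1E)]; [sides|sides|].
    destruct (ex2 X Y N k1 g h k1L k1R) as [k2 (k2L & k2R & k2E)].
    exists k2; split; [exact k2L|split; [exact k2R|]].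
    rewrite <- sqcomp_assoc, k2E; exact k1E.
  - intros X Y N k k' kL kR kE; apply un2; auto; apply un1.
    + rewrite !sqcomp_L, kL; reflexivity.
    + rewrite !sqcomp_R, kR; reflexivity.
    + rewrite !sqcomp_assoc; exact kE.
Qed.

Lemma opcartesian_sqcomp (A B A1 B1 A2 B2 : ob D) (M : hor A B) (P1 : hor A1 B1)
  (P2 : hor A2 B2) (s1 : sq M P1) (s2 : sq P1 P2) :
  opcartesian_sq s1 -> opcartesian_sq s2 -> opcartesian_sq (s1 ;; s2).
Proof.
  intros [ex1 un1] [ex2 un2]; split.
  - intros X Y N th g h thL thR.
    destruct (ex1 X Y N th (vcomp (sqL s2) g) (vcomp (sqR s2) h))
      as [k1 (k1L & k1R & k1E)]; [sides|sides|].
    destruct (ex2 X Y N k1 g h k1L k1R) as [k2 (k2L & k2R & k2E)].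
    exists k2; split; [exact k2L|split; [exact k2R|]].
    rewrite sqcomp_assoc, k2E; exact k1E.
  - intros X Y N k k' kL kR kE; apply un2; auto; apply un1.
    + rewrite !sqcomp_L, kL; reflexivity.
    + rewrite !sqcomp_R, kR; reflexivity.
    + rewrite <- !sqcomp_assoc; exact kE.
Qed.
End CartesianSquares.

Arguments cart_lift {D A' B' A B P M r} r_cart {X Y N} th g h thL thR.
Arguments opcart_lift {D A' B' A B P M s} s_opcart {X Y N} th g h thL thR.

(** * Squares built from companions and conjoints *)

Section Companion.
Variables (D : DoubleCat) (A B : ob D) (f : vhom A B) (fh : hor A B)
  (p1 : sq fh (hunit B)) (p2 : sq (hunit A) fh).
Hypotheses (p1_L : sqL p1 = f) (p1_R : sqR p1 = vid B)
  (p2_L : sqL p2 = vid A) (p2_R : sqR p2 = f)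
  (p2_p1 : p2 ;; p1 = hunitSq f)
  (p2_sqh_p1 : forall e : sqR p2 = sqL p1,
      lunitinv fh ;; sqh e ;; runit fh = sqid fh).

Lemma companion_sqh_runit (e : sqR p2 = sqL p1) : sqh e ;; runit fh = lunit fh.
Proof.
  rewrite <- (sqcomp_id_l (sqh e ;; runit fh)), <- lunit_inv1, !sqcomp_assoc,
    <- (sqcomp_assoc (lunitinv fh)), p2_sqh_p1.
  apply sqcomp_id_r.
Qed.

Lemma companion_lunitinv_sqh (e : sqR p2 = sqL p1) : lunitinv fh ;; sqh e = runitinv fh.
Proof.
  rewrite <- (sqcomp_id_r (lunitinv fh ;; sqh e)), <- runit_inv1, <- !sqcomp_assoc,
    p2_sqh_p1.
  apply sqcomp_id_l.
Qed.

Lemma companion_cart_retraction (C : ob D) (M : hor B C) :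
  lunitinv (hcomp fh M) ;; (p2 ⊙ ((p1 ⊙ sqid M) ;; lunit M)) = sqid _.
Proof.
  transitivity (lunitinv (hcomp fh M) ;; ((p2 ⊙ (p1 ⊙ sqid M)) ;; (sqid fh ⊙ lunit M))).
  { apply f_equal; rewrite sqcomp_sqh; apply sqh_congr; simpl_isos; reflexivity. }
  rewrite sqid_lunit_triangle, <- (sqcomp_assoc (sqh _) (associnv _ _ _)),
    associnv_natural_l, sqcomp_assoc, sqcomp_sqh.
  transitivity (lunitinv (hcomp fh M) ;; (associnv (hunit A) fh M ;; (lunit fh ⊙ sqid M))).
  { do 2 apply f_equal; apply sqh_congr;
      [apply companion_sqh_runit|apply sqcomp_id_l]. }
  rewrite associnv_lunit; apply lunit_inv2.
Qed.

Lemma companion_cart_recover (C X Y : ob D) (M : hor B C) (N : hor X Y)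
  (k : sq N (hcomp fh M)) :
  lunitinv N ;; ((hunitSq (sqL k) ;; p2) ⊙ (k ;; ((p1 ⊙ sqid M) ;; lunit M))) = k.
Proof.
  transitivity (lunitinv N ;; ((hunitSq (sqL k) ⊙ k)
                                ;; (p2 ⊙ ((p1 ⊙ sqid M) ;; lunit M)))).
  { apply f_equal; rewrite sqcomp_sqh; apply sqh_irrelevant. }
  rewrite <- sqcomp_assoc, lunitinv_natural, sqcomp_assoc, companion_cart_retraction.
  apply sqcomp_id_r.
Qed.

Lemma companion_cartesian (C : ob D) (M : hor B C) :
  cartesian_sq ((p1 ⊙ sqid M) ;; lunit M).
Proof.
  split.
  - intros X Y N th g h thL thR.
    exists (lunitinv N ;; ((hunitSq g ;; p2) ⊙ th)).
    split; [sides|split; [sides|]].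
    transitivity (lunitinv N ;; (hunitSq (vcomp g f) ⊙ th ;; lunit M)).
    { rewrite !sqcomp_assoc; apply f_equal.
      rewrite <- sqcomp_assoc, sqcomp_sqh; apply sqcomp_congl, sqh_congr.
      - rewrite sqcomp_assoc, p2_p1, hunitSq_comp; reflexivity.
      - apply sqcomp_id_r. }
    rewrite lunit_natural, <- sqcomp_assoc, lunit_inv2; apply sqcomp_id_l.
  - intros X Y N k k' kL kR kE.
    rewrite <- (companion_cart_recover k), <- (companion_cart_recover k').
    apply f_equal, sqh_congr; [rewrite kL; reflexivity|exact kE].
Qed.

Lemma companion_opcart_section (Z : ob D) (C : hor Z A) :
  ((runitinv C ;; (sqid C ⊙ p2)) ⊙ p1) ;; runit (hcomp C fh) = sqid _.
Proof.
  transitivity ((sqid C ⊙ lunitinv fh) ;; associnv C (hunit A) fh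
                ;; ((sqid C ⊙ p2) ⊙ p1) ;; runit (hcomp C fh)).
  { apply sqcomp_congl.
    rewrite <- runitinv_sqid_triangle, sqcomp_sqh; apply sqh_congr; simpl_isos;
      reflexivity. }
  rewrite (sqcomp_assoc (sqh _) (associnv _ _ _)), associnv_natural_r.
  transitivity ((sqid C ⊙ runitinv fh) ;; associnv C fh (hunit B)
                ;; runit (hcomp C fh)).
  { apply sqcomp_congl; rewrite <- sqcomp_assoc; apply sqcomp_congl.
    rewrite sqcomp_sqh.
    apply sqh_congr; [simpl_isos; reflexivity|apply companion_lunitinv_sqh]. }
  rewrite sqcomp_assoc, associnv_runit, sqcomp_sqh.
  apply sqh_sqid; simpl_isos; reflexivity.
Qed.

Lemma companion_opcart_recover (Z X Y : ob D) (C : hor Z A) (N : hor X Y)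
  (k : sq (hcomp C fh) N) :
  (((runitinv C ;; (sqid C ⊙ p2)) ;; k) ⊙ (p1 ;; hunitSq (sqR k))) ;; runit N = k.
Proof.
  transitivity (((runitinv C ;; (sqid C ⊙ p2)) ⊙ p1) ;; (k ⊙ hunitSq (sqR k))
                ;; runit N).
  { apply sqcomp_congl; rewrite sqcomp_sqh; apply sqh_irrelevant. }
  rewrite sqcomp_assoc, runit_natural, <- sqcomp_assoc, companion_opcart_section.
  apply sqcomp_id_l.
Qed.

Lemma companion_opcartesian (Z : ob D) (C : hor Z A) :
  opcartesian_sq (runitinv C ;; (sqid C ⊙ p2)).
Proof.
  split.
  - intros X Y N th g h thL thR.
    exists ((th ⊙ (p1 ;; hunitSq h)) ;; runit N).
    split; [sides|split; [sides|]].
    transitivity (runitinv C ;; ((th ⊙ hunitSq (vcomp f h)) ;; runit N)).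
    { rewrite !sqcomp_assoc; apply sqcomp_congr.
      rewrite <- sqcomp_assoc, sqcomp_sqh; apply sqcomp_congl, sqh_congr;
        [apply sqcomp_id_l|rewrite <- sqcomp_assoc, p2_p1, hunitSq_comp; reflexivity]. }
    rewrite runit_natural, <- sqcomp_assoc, runit_inv2; apply sqcomp_id_l.
  - intros X Y N k k' kL kR kE.
    rewrite <- (companion_opcart_recover k), <- (companion_opcart_recover k').
    apply sqcomp_congl, sqh_congr; [exact kE|rewrite kR; reflexivity].
Qed.
End Companion.

Section Conjoint.
Variables (D : DoubleCat) (A B : ob D) (f : vhom A B) (fc : hor B A)
  (q1 : sq fc (hunit B)) (q2 : sq (hunit A) fc).
Hypotheses (q1_L : sqL q1 = vid B) (q1_R : sqR q1 = f)
  (q2_L : sqL q2 = f) (q2_R : sqR q2 = vid A)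
  (q2_q1 : q2 ;; q1 = hunitSq f)
  (q1_sqh_q2 : forall e : sqR q1 = sqL q2,
      runitinv fc ;; sqh e ;; lunit fc = sqid fc).

Lemma conjoint_sqh_lunit (e : sqR q1 = sqL q2) : sqh e ;; lunit fc = runit fc.
Proof.
  rewrite <- (sqcomp_id_l (sqh e ;; lunit fc)), <- runit_inv1, !sqcomp_assoc,
    <- (sqcomp_assoc (runitinv fc)), q1_sqh_q2.
  apply sqcomp_id_r.
Qed.

Lemma conjoint_runitinv_sqh (e : sqR q1 = sqL q2) : runitinv fc ;; sqh e = lunitinv fc.
Proof.
  rewrite <- (sqcomp_id_r (runitinv fc ;; sqh e)), <- lunit_inv1, <- !sqcomp_assoc,
    q1_sqh_q2.
  apply sqcomp_id_l.
Qed.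

Lemma conjoint_cart_retraction (C : ob D) (M : hor C B) :
  runitinv (hcomp M fc) ;; (((sqid M ⊙ q1) ;; runit M) ⊙ q2) = sqid _.
Proof.
  transitivity (runitinv (hcomp M fc) ;; (((sqid M ⊙ q1) ⊙ q2) ;; (runit M ⊙ sqid fc))).
  { apply sqcomp_congr; rewrite sqcomp_sqh; apply sqh_congr; simpl_isos; reflexivity. }
  transitivity (runitinv (hcomp M fc)
                ;; ((((sqid M ⊙ q1) ⊙ q2) ;; assoc M (hunit B) fc)
                    ;; (sqid M ⊙ lunit fc))).
  { apply sqcomp_congr; rewrite sqcomp_assoc, triangle_sq.
    apply sqcomp_congr, sqh_irrelevant. }
  rewrite assoc_natural_l, sqcomp_assoc, sqcomp_sqh.
  transitivity (runitinv (hcomp M fc) ;; (assoc M fc (hunit A) ;; (sqid M ⊙ runit fc))).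
  { do 2 apply sqcomp_congr.
    apply sqh_congr; [simpl_isos; reflexivity|apply conjoint_sqh_lunit]. }
  rewrite assoc_runit; apply runit_inv2.
Qed.

Lemma conjoint_cart_recover (C X Y : ob D) (M : hor C B) (N : hor X Y)
  (k : sq N (hcomp M fc)) :
  runitinv N ;; ((k ;; ((sqid M ⊙ q1) ;; runit M)) ⊙ (hunitSq (sqR k) ;; q2)) = k.
Proof.
  transitivity (runitinv N ;; ((k ⊙ hunitSq (sqR k))
                                ;; (((sqid M ⊙ q1) ;; runit M) ⊙ q2))).
  { apply sqcomp_congr; rewrite sqcomp_sqh; apply sqh_irrelevant. }
  rewrite <- sqcomp_assoc, runitinv_natural, sqcomp_assoc, conjoint_cart_retraction.
  apply sqcomp_id_r.
Qed.

Lemma conjoint_cartesian (C : ob D) (M : hor C B) :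
  cartesian_sq ((sqid M ⊙ q1) ;; runit M).
Proof.
  split.
  - intros X Y N th g h thL thR.
    exists (runitinv N ;; (th ⊙ (hunitSq h ;; q2))).
    split; [sides|split; [sides|]].
    transitivity (runitinv N ;; (th ⊙ hunitSq (vcomp h f) ;; runit M)).
    { rewrite !sqcomp_assoc; apply sqcomp_congr.
      rewrite <- sqcomp_assoc, sqcomp_sqh; apply sqcomp_congl, sqh_congr.
      - apply sqcomp_id_r.
      - rewrite sqcomp_assoc, q2_q1, hunitSq_comp; reflexivity. }
    rewrite runit_natural, <- sqcomp_assoc, runit_inv2; apply sqcomp_id_l.
  - intros X Y N k k' kL kR kE.
    rewrite <- (conjoint_cart_recover k), <- (conjoint_cart_recover k').
    apply sqcomp_congr, sqh_congr; [exact kE|rewrite kR; reflexivity].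
Qed.

Lemma conjoint_opcart_section (Z : ob D) (C : hor A Z) :
  (q1 ⊙ (lunitinv C ;; (q2 ⊙ sqid C))) ;; lunit (hcomp fc C) = sqid _.
Proof.
  transitivity (((sqid fc ⊙ lunitinv C) ;; (q1 ⊙ (q2 ⊙ sqid C))) ;; lunit (hcomp fc C)).
  { apply sqcomp_congl; rewrite sqcomp_sqh; apply sqh_congr; simpl_isos; reflexivity. }
  rewrite sqid_lunitinv_triangle, (sqcomp_assoc (sqh _) (assoc _ _ _)),
    assoc_natural_r, <- (sqcomp_assoc (sqh _) (sqh _)), sqcomp_sqh.
  transitivity (((lunitinv fc ⊙ sqid C) ;; assoc (hunit B) fc C) ;; lunit (hcomp fc C)).
  { do 2 apply sqcomp_congl.
    apply sqh_congr; [apply conjoint_runitinv_sqh|simpl_isos; reflexivity]. }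
  rewrite lunitinv_assoc; apply lunit_inv2.
Qed.

Lemma conjoint_opcart_recover (Z X Y : ob D) (C : hor A Z) (N : hor X Y)
  (k : sq (hcomp fc C) N) :
  ((q1 ;; hunitSq (sqL k)) ⊙ ((lunitinv C ;; (q2 ⊙ sqid C)) ;; k)) ;; lunit N = k.
Proof.
  transitivity ((q1 ⊙ (lunitinv C ;; (q2 ⊙ sqid C))) ;; (hunitSq (sqL k) ⊙ k)
                ;; lunit N).
  { apply sqcomp_congl; rewrite sqcomp_sqh; apply sqh_irrelevant. }
  rewrite sqcomp_assoc, lunit_natural, <- sqcomp_assoc, conjoint_opcart_section.
  apply sqcomp_id_l.
Qed.

Lemma conjoint_opcartesian (Z : ob D) (C : hor A Z) :
  opcartesian_sq (lunitinv C ;; (q2 ⊙ sqid C)).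
Proof.
  split.
  - intros X Y N th g h thL thR.
    exists (((q1 ;; hunitSq g) ⊙ th) ;; lunit N).
    split; [sides|split; [sides|]].
    transitivity (lunitinv C ;; ((hunitSq (vcomp f g) ⊙ th) ;; lunit N)).
    { rewrite !sqcomp_assoc; apply sqcomp_congr.
      rewrite <- sqcomp_assoc, sqcomp_sqh; apply sqcomp_congl, sqh_congr;
        [rewrite <- sqcomp_assoc, q2_q1, hunitSq_comp; reflexivity|apply sqcomp_id_l]. }
    rewrite lunit_natural, <- sqcomp_assoc, lunit_inv2; apply sqcomp_id_l.
  - intros X Y N k k' kL kR kE.
    rewrite <- (conjoint_opcart_recover k), <- (conjoint_opcart_recover k').
    apply sqcomp_congl, sqh_congr; [rewrite kL; reflexivity|exact kE].
Qed.
End Conjoint.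

Section Restriction.
Variables (D : DoubleCat) (D_fibrant : fibrant D) (A B : ob D) (f : vhom A B).

Lemma fibrant_restriction (M : hor B B) :
  exists (P : hor A A) (r : sq P M),
    sqL r = f /\ sqR r = f /\ inhabited (cartesian_sq r).
Proof.
  destruct (D_fibrant f) as
    [[fh (p1 & p2 & p1_L & p1_R & p2_L & p2_R & p2_p1 & p2_sqh_p1)]
     [fc (q1 & q2 & q1_L & q1_R & q2_L & q2_R & q2_q1 & q1_sqh_q2)]].
  exists (hcomp (hcomp fh M) fc),
    (((sqid (hcomp fh M) ⊙ q1) ;; runit _) ;; ((p1 ⊙ sqid M) ;; lunit M)).
  split; [sides|split; [sides|constructor]].
  apply cartesian_sqcomp.
  - exact (conjoint_cartesian q1_L q1_R q2_L q2_R q2_q1 q1_sqh_q2 _).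
  - exact (companion_cartesian p1_L p1_R p2_L p2_R p2_p1 p2_sqh_p1 M).
Qed.

Lemma fibrant_extension (C : hor A A) :
  exists (P : hor B B) (s : sq C P),
    sqL s = f /\ sqR s = f /\ inhabited (opcartesian_sq s).
Proof.
  destruct (D_fibrant f) as
    [[fh (p1 & p2 & p1_L & p1_R & p2_L & p2_R & p2_p1 & p2_sqh_p1)]
     [fc (q1 & q2 & q1_L & q1_R & q2_L & q2_R & q2_q1 & q1_sqh_q2)]].
  exists (hcomp (hcomp fc C) fh),
    ((lunitinv C ;; (q2 ⊙ sqid C)) ;; (runitinv _ ;; (sqid (hcomp fc C) ⊙ p2))).
  split; [sides|split; [sides|constructor]].
  apply opcartesian_sqcomp.
  - exact (conjoint_opcartesian q1_L q1_R q2_L q2_R q2_q1 q1_sqh_q2 C).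
  - exact (companion_opcartesian p1_L p1_R p2_L p2_R p2_p1 p2_sqh_p1 _).
Qed.
End Restriction.

(** * Transporting (co)monad structure along (op)cartesian squares *)

Ltac congr_sq := first [ reflexivity | apply sqh_irrelevant
  | apply sqh_congr; congr_sq | apply sqcomp_congl; congr_sq
  | apply sqcomp_congr; congr_sq ].

Lemma mnd_hom_inj (D : DoubleCat) (X Y : monad D) (a b : mnd_hom X Y) :
  mh a = mh b -> a = b.
Proof.
  destruct a as [a ? ? ?], b as [b ? ? ?]; simpl; intros <-.
  f_equal; apply proof_irrelevance.
Qed.

Lemma cmd_hom_inj (D : DoubleCat) (X Y : comonad D) (a b : cmd_hom X Y) :
  ch a = ch b -> a = b.
Proof.
  destruct a as [a ? ? ?], b as [b ? ? ?]; simpl; intros <-.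
  f_equal; apply proof_irrelevance.
Qed.

Section MonadRestriction.
Variables (D : DoubleCat) (X : monad D) (A : ob D) (f : vhom A (mA X))
  (P : hor A A) (r : sq P (mM X)).
Hypotheses (r_L : sqL r = f) (r_R : sqR r = f) (r_cart : cartesian_sq r).

Local Hint Rewrite cart_lift_L cart_lift_R : sides.

Definition restr_mul : sq (hcomp P P) P :=
  cart_lift r_cart ((r ⊙ r) ;; mmul X) (vid A) (vid A) ltac:(sides) ltac:(sides).

Definition restr_unit : sq (hunit A) P :=
  cart_lift r_cart (hunitSq f ;; munit X) (vid A) (vid A) ltac:(sides) ltac:(sides).

Lemma restr_mul_L : sqL restr_mul = vid A. Proof. apply cart_lift_L. Qed.
Lemma restr_mul_R : sqR restr_mul = vid A. Proof. apply cart_lift_R. Qed.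
Lemma restr_unit_L : sqL restr_unit = vid A. Proof. apply cart_lift_L. Qed.
Lemma restr_unit_R : sqR restr_unit = vid A. Proof. apply cart_lift_R. Qed.

Lemma restr_mulE : restr_mul ;; r = (r ⊙ r) ;; mmul X.
Proof. apply cart_liftK. Qed.

Lemma restr_unitE : restr_unit ;; r = hunitSq f ;; munit X.
Proof. apply cart_liftK. Qed.

Local Hint Rewrite restr_mul_L restr_mul_R restr_unit_L restr_unit_R : sides.

Lemma restr_mul_assoc (e1 : sqR restr_mul = sqL (sqid P))
  (e2 : sqR (sqid P) = sqL restr_mul) :
  sqh e1 ;; restr_mul = assoc P P P ;; (sqh e2 ;; restr_mul).
Proof.
  apply (cart_unique r_cart); [sides|sides|].
  transitivity (((r ⊙ r) ⊙ r) ;; ((mmul X ⊙ sqid (mM X)) ;; mmul X)).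
  { rewrite sqcomp_assoc, restr_mulE, <- sqcomp_assoc, sqcomp_sqh, <- sqcomp_assoc,
      sqcomp_sqh.
    apply sqcomp_congl, sqh_congr;
      [rewrite restr_mulE; congr_sq|simpl_isos; reflexivity]. }
  rewrite (mmul_assoc _ (ltac:(sides) : sqR (sqid (mM X)) = sqL (mmul X))),
    <- sqcomp_assoc, assoc_natural_l, !sqcomp_assoc, restr_mulE.
  apply sqcomp_congr; rewrite <- !sqcomp_assoc, !sqcomp_sqh.
  apply sqcomp_congl, sqh_congr; [simpl_isos; reflexivity|rewrite restr_mulE; congr_sq].
Qed.

Lemma restr_unit_left (e : sqR restr_unit = sqL (sqid P)) :
  sqh e ;; restr_mul = lunit P.
Proof.
  apply (cart_unique r_cart); [sides|sides|].
  transitivity ((hunitSq f ⊙ r) ;; ((munit X ⊙ sqid (mM X)) ;; mmul X)).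
  { rewrite sqcomp_assoc, restr_mulE, <- !sqcomp_assoc, !sqcomp_sqh.
    apply sqcomp_congl, sqh_congr; [rewrite restr_unitE|simpl_isos]; reflexivity. }
  rewrite munit_left, lunit_natural; reflexivity.
Qed.

Lemma restr_unit_right (e : sqR (sqid P) = sqL restr_unit) :
  sqh e ;; restr_mul = runit P.
Proof.
  apply (cart_unique r_cart); [sides|sides|].
  transitivity ((r ⊙ hunitSq f) ;; ((sqid (mM X) ⊙ munit X) ;; mmul X)).
  { rewrite sqcomp_assoc, restr_mulE, <- !sqcomp_assoc, !sqcomp_sqh.
    apply sqcomp_congl, sqh_congr; [simpl_isos|rewrite restr_unitE]; reflexivity. }
  rewrite munit_right, runit_natural; reflexivity.
Qed.

Definition restr_monad : monad D :=
  Build_monad restr_mul_L restr_mul_R restr_unit_L restr_unit_R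
    restr_mul_assoc restr_unit_left restr_unit_right.

Lemma restr_hom_sides : sqL r = sqR r.
Proof. rewrite r_L, r_R; reflexivity. Qed.

Lemma restr_hom_mul (e : sqR r = sqL r) :
  mmul restr_monad ;; r = sqh e ;; mmul X.
Proof. simpl; rewrite restr_mulE; congr_sq. Qed.

Lemma restr_hom_unit : munit restr_monad ;; r = hunitSq (sqL r) ;; munit X.
Proof. simpl; rewrite restr_unitE, r_L; reflexivity. Qed.

Definition restr_hom : mnd_hom restr_monad X :=
  @Build_mnd_hom D restr_monad X r restr_hom_sides restr_hom_mul restr_hom_unit.

Section Factorization.
Variables (Z : monad D) (g : mnd_hom Z X) (h : vhom (mA Z) A).
Hypothesis g_over_h : sqL (mh g) = vcomp h (sqL r).

Lemma restr_factor_side_R : sqR (mh g) = vcomp h (sqR r).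
Proof. rewrite <- (mh_sides g), g_over_h, r_L, r_R; reflexivity. Qed.

Definition restr_factor_sq : sq (mM Z) P :=
  cart_lift r_cart (mh g) h h g_over_h restr_factor_side_R.

Lemma restr_factor_L : sqL restr_factor_sq = h. Proof. apply cart_lift_L. Qed.
Lemma restr_factor_R : sqR restr_factor_sq = h. Proof. apply cart_lift_R. Qed.
Lemma restr_factorK : restr_factor_sq ;; r = mh g. Proof. apply cart_liftK. Qed.

Local Hint Rewrite restr_factor_L restr_factor_R : sides.

Lemma restr_factor_sides : sqL restr_factor_sq = sqR restr_factor_sq.
Proof. sides. Qed.

Lemma restr_factor_mul (e : sqR restr_factor_sq = sqL restr_factor_sq) :
  mmul Z ;; restr_factor_sq = sqh e ;; mmul restr_monad.
Proof.
  simpl; apply (cart_unique r_cart); [sides|sides|].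
  rewrite sqcomp_assoc, restr_factorK, (mh_mul (m := g) (eq_sym (mh_sides g))),
    sqcomp_assoc, restr_mulE, <- sqcomp_assoc, sqcomp_sqh.
  apply sqcomp_congl, sqh_congr; symmetry; apply restr_factorK.
Qed.

Lemma restr_factor_unit :
  munit Z ;; restr_factor_sq = hunitSq (sqL restr_factor_sq) ;; munit restr_monad.
Proof.
  simpl; apply (cart_unique r_cart); [sides|sides|].
  rewrite sqcomp_assoc, restr_factorK, mh_unit, sqcomp_assoc, restr_unitE,
    <- sqcomp_assoc, <- hunitSq_comp, g_over_h, restr_factor_L, r_L.
  reflexivity.
Qed.

Definition restr_factor : mnd_hom Z restr_monad :=
  @Build_mnd_hom D Z restr_monad restr_factor_sq
    restr_factor_sides restr_factor_mul restr_factor_unit.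
End Factorization.

Lemma restr_hom_cartesian :
  @cartesian (ob D) (@vhom D) (@vcomp D) (monad D) (@mnd_hom D) (@mnd_comp D)
    (@mA D) (@mnd_proj D) restr_monad X restr_hom.
Proof.
  intros Z g h g_over_h; exists (restr_factor g_over_h); split.
  - split; [apply restr_factor_L|apply mnd_hom_inj, restr_factorK].
  - intros k' [k'_over_h k'_comp]; apply mnd_hom_inj, (cart_unique r_cart); simpl.
    + rewrite restr_factor_L; exact k'_over_h.
    + rewrite restr_factor_R, <- k'_over_h; symmetry; apply (mh_sides k').
    + rewrite restr_factorK; exact (f_equal mh k'_comp).
Qed.

Lemma restr_hom_over_f :
  existT (fun A' => vhom A' (mA X)) (mA restr_monad) (mnd_proj restr_hom)
  = existT _ A f.
Proof. unfold mnd_proj; simpl; rewrite r_L; reflexivity. Qed.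
End MonadRestriction.

Section ComonadExtension.
Variables (D : DoubleCat) (X : comonad D) (B : ob D) (f : vhom (cA X) B)
  (P : hor B B) (s : sq (cC X) P).
Hypotheses (s_L : sqL s = f) (s_R : sqR s = f) (s_opcart : opcartesian_sq s).

Local Hint Rewrite opcart_lift_L opcart_lift_R : sides.

Definition ext_delta : sq P (hcomp P P) :=
  opcart_lift s_opcart (cdelta X ;; (s ⊙ s)) (vid B) (vid B) ltac:(sides) ltac:(sides).

Definition ext_counit : sq P (hunit B) :=
  opcart_lift s_opcart (ceps X ;; hunitSq f) (vid B) (vid B) ltac:(sides) ltac:(sides).

Lemma ext_delta_L : sqL ext_delta = vid B. Proof. apply opcart_lift_L. Qed.
Lemma ext_delta_R : sqR ext_delta = vid B. Proof. apply opcart_lift_R. Qed.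
Lemma ext_counit_L : sqL ext_counit = vid B. Proof. apply opcart_lift_L. Qed.
Lemma ext_counit_R : sqR ext_counit = vid B. Proof. apply opcart_lift_R. Qed.

Lemma ext_deltaE : s ;; ext_delta = cdelta X ;; (s ⊙ s).
Proof. apply opcart_liftK. Qed.

Lemma ext_counitE : s ;; ext_counit = ceps X ;; hunitSq f.
Proof. apply opcart_liftK. Qed.

Local Hint Rewrite ext_delta_L ext_delta_R ext_counit_L ext_counit_R : sides.

Lemma ext_delta_coassoc (e1 : sqR ext_delta = sqL (sqid P))
  (e2 : sqR (sqid P) = sqL ext_delta) :
  ext_delta ;; sqh e1 ;; assoc P P P = ext_delta ;; sqh e2.
Proof.
  apply (opcart_unique s_opcart); [sides|sides|].
  transitivity (cdelta X ;; (cdelta X ⊙ sqid (cC X)) ;; ((s ⊙ s) ⊙ s) ;; assoc P P P).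
  { rewrite <- !sqcomp_assoc, ext_deltaE; apply sqcomp_congl.
    rewrite !sqcomp_assoc; apply sqcomp_congr; rewrite !sqcomp_sqh.
    apply sqh_congr; [rewrite ext_deltaE; congr_sq|simpl_isos; reflexivity]. }
  transitivity (cdelta X ;; (cdelta X ⊙ sqid (cC X)) ;; assoc (cC X) (cC X) (cC X)
                ;; (s ⊙ (s ⊙ s))).
  { rewrite !sqcomp_assoc; do 2 apply sqcomp_congr; rewrite assoc_natural_l; congr_sq. }
  rewrite (cdelta_coassoc _ (ltac:(sides) : sqR (sqid (cC X)) = sqL (cdelta X))).
  transitivity (cdelta X ;; (s ⊙ (cdelta X ;; (s ⊙ s)))).
  { rewrite sqcomp_assoc, sqcomp_sqh; apply sqcomp_congr, sqh_congr; simpl_isos;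
      reflexivity. }
  rewrite <- sqcomp_assoc, ext_deltaE, sqcomp_assoc, sqcomp_sqh.
  apply sqcomp_congr, sqh_congr; [simpl_isos; reflexivity|rewrite ext_deltaE; congr_sq].
Qed.

Lemma ext_counit_left (e : sqR ext_counit = sqL (sqid P)) :
  ext_delta ;; sqh e ;; lunit P = sqid P.
Proof.
  apply (opcart_unique s_opcart); [sides|sides|].
  transitivity (cdelta X ;; (ceps X ⊙ sqid (cC X)) ;; ((hunitSq f ⊙ s) ;; lunit P)).
  { rewrite <- !sqcomp_assoc, ext_deltaE; apply sqcomp_congl.
    rewrite !sqcomp_assoc; apply sqcomp_congr; rewrite !sqcomp_sqh.
    apply sqh_congr; [rewrite ext_counitE|simpl_isos]; reflexivity. }
  rewrite lunit_natural, <- sqcomp_assoc, ceps_left, sqcomp_id_l, sqcomp_id_r.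
  reflexivity.
Qed.

Lemma ext_counit_right (e : sqR (sqid P) = sqL ext_counit) :
  ext_delta ;; sqh e ;; runit P = sqid P.
Proof.
  apply (opcart_unique s_opcart); [sides|sides|].
  transitivity (cdelta X ;; (sqid (cC X) ⊙ ceps X) ;; ((s ⊙ hunitSq f) ;; runit P)).
  { rewrite <- !sqcomp_assoc, ext_deltaE; apply sqcomp_congl.
    rewrite !sqcomp_assoc; apply sqcomp_congr; rewrite !sqcomp_sqh.
    apply sqh_congr; [simpl_isos|rewrite ext_counitE]; reflexivity. }
  rewrite runit_natural, <- sqcomp_assoc, ceps_right, sqcomp_id_l, sqcomp_id_r.
  reflexivity.
Qed.

Definition ext_comonad : comonad D :=
  Build_comonad ext_delta_L ext_delta_R ext_counit_L ext_counit_R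
    ext_delta_coassoc ext_counit_left ext_counit_right.

Lemma ext_hom_sides : sqL s = sqR s.
Proof. rewrite s_L, s_R; reflexivity. Qed.

Lemma ext_hom_delta (e : sqR s = sqL s) :
  cdelta X ;; sqh e = s ;; cdelta ext_comonad.
Proof. simpl; rewrite ext_deltaE; congr_sq. Qed.

Lemma ext_hom_counit : ceps X ;; hunitSq (sqL s) = s ;; ceps ext_comonad.
Proof. simpl; rewrite ext_counitE, s_L; reflexivity. Qed.

Definition ext_hom : cmd_hom X ext_comonad :=
  @Build_cmd_hom D X ext_comonad s ext_hom_sides ext_hom_delta ext_hom_counit.

Section Factorization.
Variables (Z : comonad D) (g : cmd_hom X Z) (h : vhom B (cA Z)).
Hypothesis g_over_h : sqL (ch g) = vcomp (sqL s) h.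

Lemma ext_factor_side_R : sqR (ch g) = vcomp (sqR s) h.
Proof. rewrite <- (ch_sides g), g_over_h, s_L, s_R; reflexivity. Qed.

Definition ext_factor_sq : sq P (cC Z) :=
  opcart_lift s_opcart (ch g) h h g_over_h ext_factor_side_R.

Lemma ext_factor_L : sqL ext_factor_sq = h. Proof. apply opcart_lift_L. Qed.
Lemma ext_factor_R : sqR ext_factor_sq = h. Proof. apply opcart_lift_R. Qed.
Lemma ext_factorK : s ;; ext_factor_sq = ch g. Proof. apply opcart_liftK. Qed.

Local Hint Rewrite ext_factor_L ext_factor_R : sides.

Lemma ext_factor_sides : sqL ext_factor_sq = sqR ext_factor_sq.
Proof. sides. Qed.

Lemma ext_factor_delta (e : sqR ext_factor_sq = sqL ext_factor_sq) :
  cdelta ext_comonad ;; sqh e = ext_factor_sq ;; cdelta Z.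
Proof.
  simpl; apply (opcart_unique s_opcart); [sides|sides|].
  rewrite <- !sqcomp_assoc, ext_deltaE, ext_factorK, sqcomp_assoc, sqcomp_sqh,
    <- (ch_delta (c := g) (eq_sym (ch_sides g))).
  apply sqcomp_congr, sqh_congr; apply ext_factorK.
Qed.

Lemma ext_factor_counit :
  ceps ext_comonad ;; hunitSq (sqL ext_factor_sq) = ext_factor_sq ;; ceps Z.
Proof.
  simpl; apply (opcart_unique s_opcart); [sides|sides|].
  rewrite <- !sqcomp_assoc, ext_counitE, ext_factorK, <- ch_eps, sqcomp_assoc,
    <- hunitSq_comp, g_over_h, ext_factor_L, s_L.
  reflexivity.
Qed.

Definition ext_factor : cmd_hom ext_comonad Z :=
  @Build_cmd_hom D ext_comonad Z ext_factor_sq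
    ext_factor_sides ext_factor_delta ext_factor_counit.
End Factorization.

Lemma ext_hom_cocartesian :
  @cocartesian (ob D) (@vhom D) (@vcomp D) (comonad D) (@cmd_hom D) (@cmd_comp D)
    (@cA D) (@cmd_proj D) X ext_comonad ext_hom.
Proof.
  intros Z g h g_over_h; exists (ext_factor g_over_h); split.
  - split; [apply ext_factor_L|apply cmd_hom_inj, ext_factorK].
  - intros k' [k'_over_h k'_comp]; apply cmd_hom_inj, (opcart_unique s_opcart); simpl.
    + rewrite ext_factor_L; exact k'_over_h.
    + rewrite ext_factor_R, <- k'_over_h; symmetry; apply (ch_sides k').
    + rewrite ext_factorK; exact (f_equal ch k'_comp).
Qed.

Lemma ext_hom_over_f :
  existT (fun B' => vhom (cA X) B') (cA ext_comonad) (cmd_proj ext_hom)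
  = existT _ B f.
Proof. unfold cmd_proj; simpl; rewrite s_L; reflexivity. Qed.
End ComonadExtension.

Theorem proposition3p17 (D : DoubleCat) :
  fibrant D ->
  @is_fibration (ob D) (@vhom D) (@vcomp D)
    (monad D) (@mnd_hom D) (@mnd_comp D) (@mA D) (@mnd_proj D) /\
  @is_opfibration (ob D) (@vhom D) (@vcomp D)
    (comonad D) (@cmd_hom D) (@cmd_comp D) (@cA D) (@cmd_proj D).
Proof.
  intros D_fibrant; split.
  - intros X A f.
    destruct (fibrant_restriction D_fibrant f (mM X)) as (P & r & r_L & r_R & [r_cart]).
    exists (restr_monad r_L r_R r_cart), (restr_hom r_L r_R r_cart).
    split; [apply restr_hom_over_f|apply restr_hom_cartesian].
  - intros X B f.
    destruct (fibrant_extension D_fibrant f (cC X)) as (P & s & s_L & s_R & [s_opcart]).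
    exists (ext_comonad s_L s_R s_opcart), (ext_hom s_L s_R s_opcart).
    split; [apply ext_hom_over_f|apply ext_hom_cocartesian].
Qed.
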